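(* Let $F$ be a field of characteristic $0$, $h\ge 0$ an integer, and $m=p+q$ with $p,q\ge0$ and $q\ge 1$. Let $z_1,\dots,z_m$ be variables with $\alpha(z_i)=d_i>0$, where $d_1,\dots,d_p$ are odd and $d_{p+1},\dots,d_m$ are even. Suppose $f\in\Gamma_{0,m}\cap T_{\mathbb{Z}}(E^h)$. Then $f\equiv f_1z_m+f_2\pmod I$, where $f_1\in\Gamma_{0,m-1}\cap T_{\mathbb{Z}}(E^h)$ is a multilinear polynomial in $z_1,\dots,z_{m-1}$, and $f_2$ is a linear combination of products of variables and of commutators $[z_i,z_j]$ in which $z_m$ occurs only inside commutators. Moreover $f_2\in\Gamma_{0,m}\cap T_{\mathbb{Z}}(E^h)$.
   Context: $L$ is a vector space over $F$ with basis $e_1,e_2,\dots$, $E$ its unital Grassmann algebra (basis $1$ and $e_{i_1}\cdots e_{i_k}$, $i_1<\cdots<i_k$, with $e_ie_j=-e_je_i$). $E^h$ is $E$ with the $\mathbb{Z}$-grading induced by $\|e_i\|=0$ for $1\le i\le h$ and $\|e_i\|=1$ for $i\ge h+1$ (basis monomials get the sum of degrees of their factors; $1$ has degree $0$). Graded polynomials live in the free unital associative algebra $F\langle X|\mathbb{Z}\rangle$ on countably many variables of each integer degree ($\alpha(x)$ = degree of $x$); $T_{\mathbb{Z}}(A)$ is the set of polynomials vanishing under every substitution of each variable $x$ by an element of $A_{\alpha(x)}$. $I$ is the smallest ideal of $F\langle X|\mathbb{Z}\rangle$ invariant under degree-preserving endomorphisms and containing $[u_1,u_2,u_3]=[[u_1,u_2],u_3]$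 for all choices of degrees of $u_1,u_2,u_3$. For variables $z_1,\dots,z_m$ of fixed positive degrees $d_1,\dots,d_m$, $\Gamma_{0,m}$ denotes the space of multilinear polynomials in $z_1,\dots,z_m$ (with no variables of degree $0$), and $\Gamma_{0,m-1}$ the analogous space for $z_1,\dots,z_{m-1}$. *)

From HB Require Import structures.
From mathcomp Require Import all_boot all_order all_algebra.
From mathcomp Require Import finmap.
From mathcomp Require Import monalg.

Set Implicit Arguments.
Unset Strict Implicit.
Unset Printing Implicit Defensive.

Import Order.TTheory GRing.Theory Num.Theory.
Local Open Scope ring_scope.


(* Graded variables: a variable is a pair (degree, index); there are   *)
(* countably many variables of each integer degree.  alpha(x) = x.1.   *)
Definition var := (int * nat)%type.
Definition alpha (x : var) : int := x.1.

Definition word := {fmonom var}.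
Definition fpoly (F : fieldType) := {malg F[word]}.

Definition X {F : fieldType} (x : var) : fpoly F := << (FMonom [:: x] : word) >>.

Definition lie {R : nzRingType} (a b : R) : R := a * b - b * a.

Definition wdeg (w : word) : int := \sum_(x <- (w : seq var)) alpha x.
Definition homog {F : fieldType} (d : int) (g : fpoly F) : Prop :=
  forall w, w \in msupp g -> wdeg w = d.

Definition subst {F : fieldType} (sigma : var -> fpoly F) (f : fpoly F) : fpoly F :=
  \sum_(w <- msupp f) f@_w *: \prod_(x <- (w : seq var)) sigma x.

(* The Grassmann algebra E on basis e_0, e_1, ... (0-indexed; e_i here *)
(* is e_{i+1} of the paper).  Elements are finite linear combinations  *)
(* of basis monomials e_S, S a finite set of indices (e_{fset0} = 1).  *)
Definition grass (F : fieldType) := {malg F[{fset nat}]}.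

Definition gsgn {F : fieldType} (S T : {fset nat}) : F :=
  if (S `&` T == fset0)%fset then
    (-1) ^+ (\sum_(s <- S) \sum_(t <- T) (t < s)%N)
  else 0.

Definition gmul {F : fieldType} (a b : grass F) : grass F :=
  \sum_(S <- msupp a) \sum_(T <- msupp b)
     (gsgn S T * a@_S * b@_T) *: << (S `|` T)%fset >>.

Definition gone {F : fieldType} : grass F := << (fset0 : {fset nat}) >>.

Definition gprod {F : fieldType} (s : seq (grass F)) : grass F := foldr gmul gone s.

(* Grading of E^h: ||e_i|| = 0 for the first h generators, 1 otherwise. *)
Definition gdeg (h : nat) (S : {fset nat}) : nat := #|` [fset i in S | (h <= i)%N] |%fset.

Definition inEh {F : fieldType} (h : nat) (d : int) (a : grass F) : Prop :=
  forall S, S \in msupp a -> (gdeg h S)%:Z = d.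

Definition geval {F : fieldType} (phi : var -> grass F) (f : fpoly F) : grass F :=
  \sum_(w <- msupp f) f@_w *: gprod [seq phi x | x <- (w : seq var)].

Definition inTZ {F : fieldType} (h : nat) (f : fpoly F) : Prop :=
  forall phi : var -> grass F, (forall x, inEh h (alpha x) (phi x)) -> geval phi f = 0.

Record graded_T_ideal {F : fieldType} (J : fpoly F -> Prop) : Prop := {
  gti0 : J 0;
  gtiD : forall a b, J a -> J b -> J (a + b);
  gtiZ : forall (c : F) a, J a -> J (c *: a);
  gtiMl : forall a b, J b -> J (a * b);
  gtiMr : forall a b, J a -> J (a * b);
  gtiS : forall sigma : var -> fpoly F, (forall x, homog (alpha x) (sigma x)) ->
           forall a, J a -> J (subst sigma a)
}.

Definition inI {F : fieldType} (g : fpoly F) : Prop :=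
  forall J : fpoly F -> Prop, graded_T_ideal J ->
    (forall x1 x2 x3 : var, J (lie (lie (X x1) (X x2)) (X x3))) -> J g.

Definition zv (d : nat -> nat) (i : nat) : var := ((d i)%:Z, i).

Definition Gamma {F : fieldType} (zs : seq var) (f : fpoly F) : Prop :=
  forall w, w \in msupp f -> perm_eq (w : seq var) zs.

Definition zlist (d : nat -> nat) (n : nat) : seq var := [seq zv d i | i <- iota 1 n].

Definition f2_factor {F : fieldType} (d : nat -> nat) (m : nat) (u : fpoly F) : Prop :=
  (exists i, (1 <= i < m)%N /\ u = X (zv d i)) \/
  (exists i j, (1 <= i <= m)%N /\ (1 <= j <= m)%N /\ u = lie (X (zv d i)) (X (zv d j))).

Definition f2_shape {F : fieldType} (d : nat -> nat) (m : nat) (f : fpoly F) : Prop :=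
  exists terms : seq (F * seq (fpoly F)),
    (forall t, t \in terms -> forall u, u \in t.2 -> f2_factor d m u) /\
    f = \sum_(t <- terms) t.1 *: \prod_(u <- t.2) u.

(* Write every monomial of f as u z_m v and let f1 be f with z_m
   deleted from every monomial.  Then f2 := f - f1 z_m is a combination of the
   differences u z_m v - u v z_m = u [z_m, v], which the Leibniz rule for
   [z_m, _] expands into products of variables and commutators [z_m, z_j]; in
   particular the congruence modulo I is an equality.  Since z_m has even
   degree d_m, it may be substituted by a product e_S of d_m fresh generators
   of degree 1; e_S is central, so for every admissible substitution phi
   0 = f(phi, z_m := e_S) = f1(phi) e_S, and because S avoids the generators
   occurring in f1(phi) this forces f1(phi) = 0.  Thus f1, and with it f2, is
   a graded identity of E^h. *)

From HB Require Import structures.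
From mathcomp Require Import all_boot all_order all_algebra.
From mathcomp Require Import finmap.
From mathcomp Require Import monalg.
From mathcomp Require Import ring.

Set Implicit Arguments.
Unset Strict Implicit.
Unset Printing Implicit Defensive.

Import GRing.Theory.
Local Open Scope ring_scope.

Section LinearExtension.

Variables (F : fieldType) (K : choiceType) (V : lmodType F).

Definition mlift (G : K -> V) (a : {malg F[K]}) : V :=
  \sum_(k <- msupp a) a@_k *: G k.

Lemma mliftEw (G : K -> V) (a : {malg F[K]}) (D : {fset K}) :
  (msupp a `<=` D)%fset -> mlift G a = \sum_(k <- D) a@_k *: G k.
Proof.
move=> sD; apply: big_fset_incl => // k _ /mcoeff_outdom ->.
by rewrite scale0r.
Qed.

Lemma mlift_is_linear (G : K -> V) : linear (mlift G).
Proof.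
move=> c a b; set D := (msupp a `|` msupp b)%fset.
have sD : (msupp (c *: a + b) `<=` D)%fset.
  by apply: fsubset_trans (msuppD_le _ _) _; rewrite fsetSU ?msuppZ_le.
rewrite (mliftEw _ sD) (@mliftEw _ a D) ?fsubsetUl // (@mliftEw _ b D) ?fsubsetUr //.
rewrite scaler_sumr -big_split; apply: eq_bigr => k _.
by rewrite mcoeffD mcoeffZ scalerDl scalerA.
Qed.

HB.instance Definition _ (G : K -> V) :=
  GRing.isLinear.Build F {malg F[K]} V *:%R (mlift G) (mlift_is_linear G).

Lemma mliftU (G : K -> V) (k : K) : mlift G << k >> = G k.
Proof.
by rewrite (@mliftEw _ _ [fset k]%fset) ?msuppU_le // big_seq_fset1 mcoeffUU scale1r.
Qed.

Lemma mliftUc (G : K -> V) (c : F) (k : K) : mlift G << c *g k >> = c *: G k.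
Proof. by rewrite (@mliftEw _ _ [fset k]%fset) ?msuppU_le // big_seq_fset1 mcoeffUU. Qed.

Lemma eq_in_mlift (G1 G2 : K -> V) (a : {malg F[K]}) :
  {in msupp a, G1 =1 G2} -> mlift G1 a = mlift G2 a.
Proof. by move=> eG; apply: eq_big_seq => k /eG ->. Qed.

Lemma mliftB_fun (G1 G2 : K -> V) (a : {malg F[K]}) :
  mlift (fun k => G1 k - G2 k) a = mlift G1 a - mlift G2 a.
Proof. by rewrite /mlift -sumrB; apply: eq_bigr => k _; rewrite scalerBr. Qed.

End LinearExtension.

Lemma mlift_comp (F : fieldType) (K : choiceType) (V W : lmodType F)
    (Phi : {linear V -> W}) (G : K -> V) (a : {malg F[K]}) :
  Phi (mlift G a) = mlift (Phi \o G) a.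
Proof. by rewrite linear_sum; apply: eq_bigr => k _; rewrite linearZ. Qed.

Lemma mlift_id (F : fieldType) (K : choiceType) (a : {malg F[K]}) :
  mlift (fun k => << k >>) a = a.
Proof.
rewrite {2}(monalgE a); apply: eq_bigr => k _.
by apply/malgP => k'; rewrite mcoeffZ !mcoeffU mulr_natr.
Qed.

Lemma mlift_ext (F : fieldType) (K : choiceType) (W : lmodType F)
    (Phi Psi : {linear {malg F[K]} -> W}) :
  (forall k, Phi << k >> = Psi << k >>) -> Phi =1 Psi.
Proof.
move=> ePhi a; rewrite -(mlift_id a) !mlift_comp.
by apply: eq_in_mlift => k _ /=; rewrite ePhi.
Qed.

Lemma msupp_sum (F : fieldType) (K : choiceType) (I : eqType) (r : seq I)
    (P : I -> {malg F[K]}) k :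
  k \in msupp (\sum_(i <- r) P i) -> exists2 i, i \in r & k \in msupp (P i).
Proof.
elim: r => [|i r IH]; first by rewrite big_nil msupp0.
rewrite big_cons => /(fsubsetP (msuppD_le _ _)); rewrite in_fsetU.
case/orP => [kP|/IH [j jr kj]]; first by exists i; rewrite ?mem_head.
by exists j; rewrite // in_cons jr orbT.
Qed.

Lemma msupp_mlift (F : fieldType) (K K' : choiceType) (G : K -> {malg F[K']})
    (a : {malg F[K]}) k' :
  k' \in msupp (mlift G a) -> exists2 k, k \in msupp a & k' \in msupp (G k).
Proof.
by case/msupp_sum => k ka /(fsubsetP (msuppZ_le _ _)) k'G; exists k.
Qed.

Lemma big_fsetU_disjoint (R : Type) (idx : R) (op : Monoid.com_law idx)
    (I : choiceType) (A B : {fset I}) (G : I -> R) :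
  [disjoint A & B]%fset ->
  \big[op/idx]_(i <- (A `|` B)%fset) G i =
    op (\big[op/idx]_(i <- A) G i) (\big[op/idx]_(i <- B) G i).
Proof.
move=> dAB; rewrite -big_cat; apply/perm_big/uniq_perm => [||i].
- exact: fset_uniq.
- rewrite cat_uniq !fset_uniq andbT /=; apply/hasPn => i iB.
  exact: (fdisjointP_sym dAB).
- by rewrite mem_cat in_fsetU.
Qed.

Section Grassmann.

Variable F : fieldType.
Implicit Types (S T U : {fset nat}) (a b c : grass F).

Definition inversions S T : nat := \sum_(s <- S) \sum_(t <- T) (t < s)%N.

Lemma gsgnE S T :
  gsgn S T = if [disjoint S & T]%fset then (-1) ^+ inversions S T else 0 :> F.
Proof. by []. Qed.

Lemma inversionsUl S T U : [disjoint S & T]%fset ->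
  inversions (S `|` T)%fset U = (inversions S U + inversions T U)%N.
Proof. exact: big_fsetU_disjoint. Qed.

Lemma inversionsUr S T U : [disjoint T & U]%fset ->
  inversions S (T `|` U)%fset = (inversions S T + inversions S U)%N.
Proof.
move=> dTU; rewrite /inversions -big_split.
by apply: eq_bigr => s _; rewrite big_fsetU_disjoint.
Qed.

Lemma inversions_sym S T : [disjoint S & T]%fset ->
  (inversions S T + inversions T S)%N = (#|` S| * #|` T|)%N.
Proof.
move=> dST; rewrite /inversions [in X in (_ + X)%N]exchange_big -big_split /=.
rewrite card_fset_sum1 big_distrl /=; apply: eq_big_seq => s sS.
rewrite card_fset_sum1 mul1n -big_split; apply: eq_big_seq => t tT /=.
have : t != s by apply: contraTneq tT => ->; exact: (fdisjointP dST).
by case: ltngtP.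
Qed.

Lemma gsgn_assoc S T U :
  gsgn T U * gsgn S (T `|` U)%fset = gsgn S T * gsgn (S `|` T)%fset U :> F.
Proof.
rewrite !gsgnE fdisjointXU fdisjointUX.
case: (boolP [disjoint S & T]%fset) => dST; case: (boolP [disjoint S & U]%fset) => dSU;
  case: (boolP [disjoint T & U]%fset) => dTU; rewrite ?mulr0 ?mul0r //.
by rewrite /= inversionsUr // inversionsUl // !exprD; ring.
Qed.

Lemma gsgn_sym S T : ~~ odd #|` S| -> gsgn S T = gsgn T S :> F.
Proof.
move=> eS; rewrite !gsgnE fdisjoint_sym.
case: (boolP [disjoint T & S]%fset) => // dTS.
have /(congr1 odd) := inversions_sym (etrans (fdisjoint_sym S T) dTS).
rewrite oddD oddM (negbTE eS) /= => eodd.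
rewrite -signr_odd -[RHS]signr_odd.
by case: (odd (inversions S T)) eodd; case: (odd (inversions T S)).
Qed.

Lemma gmulE_l a b :
  gmul a b = mlift (fun S => mlift (fun T => gsgn S T *: << (S `|` T)%fset >>) b) a.
Proof.
apply: eq_bigr => S _; rewrite scaler_sumr; apply: eq_bigr => T _.
by rewrite !scalerA; congr (_ *: _); ring.
Qed.

Lemma gmulE_r a b :
  gmul a b = mlift (fun T => mlift (fun S => gsgn S T *: << (S `|` T)%fset >>) a) b.
Proof.
rewrite /gmul exchange_big; apply: eq_bigr => T _; rewrite scaler_sumr.
by apply: eq_bigr => S _; rewrite !scalerA; congr (_ *: _); ring.
Qed.

Lemma gmul_is_linear a : linear (gmul a).
Proof. by move=> k b c; rewrite !(gmulE_r a) linearP. Qed.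

HB.instance Definition _ a :=
  GRing.isLinear.Build F (grass F) (grass F) *:%R (gmul a) (gmul_is_linear a).

Definition gmulr b a := gmul a b.

Lemma gmulr_is_linear b : linear (gmulr b).
Proof. by move=> k a c; rewrite /gmulr !(gmulE_l _ b) linearP. Qed.

HB.instance Definition _ b :=
  GRing.isLinear.Build F (grass F) (grass F) *:%R (gmulr b) (gmulr_is_linear b).

Lemma gmulZr k a b : gmul a (k *: b) = k *: gmul a b.
Proof. exact: linearZ_LR. Qed.

Lemma gmulZl k a b : gmul (k *: a) b = k *: gmul a b.
Proof. exact: (linearZ_LR (gmulr b)). Qed.

Lemma gmulUU S T : gmul << S >> << T >> = gsgn S T *: << (S `|` T)%fset >> :> grass F.
Proof. by rewrite gmulE_l !mliftU. Qed.

Lemma gmulA a b c : gmul a (gmul b c) = gmul (gmul a b) c.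
Proof.
have eU S T U :
    gmul << S >> (gmul << T >> << U >>) = gmul (gmul << S >> << T >>) << U >> :> grass F.
  by rewrite !gmulUU gmulZr gmulZl !gmulUU !scalerA fsetUA gsgn_assoc.
have eUU S T : gmul << S >> (gmul << T >> c) = gmul (gmul << S >> << T >>) c.
  exact: (mlift_ext (Phi := gmul << S >> \o gmul << T >>)
                    (Psi := gmul (gmul << S >> << T >>)) (eU S T) c).
have eUa S : gmul << S >> (gmul b c) = gmul (gmul << S >> b) c.
  exact: (mlift_ext (Phi := gmul << S >> \o gmulr c)
                    (Psi := gmulr c \o gmul << S >>) (eUU S) b).
exact: (mlift_ext (Phi := gmulr (gmul b c)) (Psi := gmulr c \o gmulr b) eUa a).
Qed.

Lemma gmul1l a : gmul gone a = a.
Proof.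
apply: (mlift_ext (Phi := gmul gone) (Psi := idfun)) => T /=.
rewrite gmulUU gsgnE fdisjoint0X fset0U /inversions.
by rewrite big_seq_fset0 expr0 scale1r.
Qed.

Lemma gprod_cons x (s : seq (grass F)) : gprod (x :: s) = gmul x (gprod s).
Proof. by []. Qed.

Lemma gprod_cat (s1 s2 : seq (grass F)) :
  gprod (s1 ++ s2) = gmul (gprod s1) (gprod s2).
Proof.
elim: s1 => [|x s1 IH]; first by rewrite cat0s [gprod [::]]/= gmul1l.
by rewrite cat_cons !gprod_cons IH gmulA.
Qed.

Lemma gmulUC S a : ~~ odd #|` S| -> gmul << S >> a = gmul a << S >>.
Proof.
move=> eS; apply: (mlift_ext (Phi := gmul << S >>) (Psi := gmulr << S >>)) => T /=.
by rewrite /gmulr !gmulUU fsetUC gsgn_sym.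
Qed.

Lemma gprod_insertU S (s1 s2 : seq (grass F)) : ~~ odd #|` S| ->
  gprod (s1 ++ << S >> :: s2) = gmul (gprod (s1 ++ s2)) << S >>.
Proof. by move=> eS; rewrite gprod_cat gprod_cons (gmulUC _ eS) gmulA -gprod_cat. Qed.

Lemma fsetU_disjoint_inj S T U :
  [disjoint S & U]%fset -> [disjoint T & U]%fset -> (S `|` U = T `|` U)%fset -> S = T.
Proof.
move=> dSU dTU /fsetP eST; apply/fsetP => i; have := eST i; rewrite !in_fsetU.
case: (boolP (i \in U)) => [iU|_]; last by rewrite !orbF.
by rewrite (negbTE (fdisjointP_sym dSU i iU)) (negbTE (fdisjointP_sym dTU i iU)).
Qed.

(* The coefficient of e_(T `|` S) in a e_S is +-a_T, as T `|` S determines T. *)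
Lemma gmulU_eq0 a S :
  (forall T, T \in msupp a -> [disjoint T & S]%fset) -> gmul a << S >> = 0 -> a = 0.
Proof.
move=> dS aS0; apply/malgP => T; rewrite mcoeff0.
case: msuppP => // Ta; have /eqP := congr1 (mcoeff (T `|` S)%fset) aS0.
rewrite gmulE_r mliftU mcoeff0 raddf_sum (bigD1_seq T) ?fset_uniq //= big1_seq.
  by rewrite addr0 !mcoeffZ mcoeffUU gsgnE dS // mulr1 mulf_eq0 signr_eq0 orbF => /eqP.
move=> T' /andP [T'T T'a]; rewrite !mcoeffZ mcoeffU.
case: eqP => [/(fsetU_disjoint_inj (dS _ T'a) (dS _ Ta)) eT|]; last by rewrite !mulr0.
by rewrite eT eqxx in T'T.
Qed.

End Grassmann.

Lemma fresh_fset (U : {fset nat}) (h n : nat) :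
  exists S : {fset nat}, [/\ #|` S| = n, gdeg h S = n & [disjoint U & S]%fset].
Proof.
pose N := (h + \max_(i <- U) i.+1)%N.
have cardS : #|` [fset i in iota N n]%fset| = n.
  by rewrite card_fseq undup_id ?iota_uniq ?size_iota.
exists [fset i in iota N n]%fset; split => //.
  rewrite /gdeg -[RHS]cardS; congr #|` _|; apply/fsetP => i.
  rewrite !inE /=; case: (boolP (i \in iota N n)); rewrite ?andbF ?andbT //.
  by rewrite mem_iota => /andP [/(leq_trans (leq_addr _ h))].
apply/fdisjointP => i iU; rewrite !inE /= mem_iota negb_and -ltnNge.
suff -> : (i < N)%N by [].
by apply: leq_trans (leq_addl h _); apply: (leq_bigmax_seq (F := succn)).
Qed.

Section Words.

Variable F : fieldType.
Implicit Types (s : seq var) (f g k : fpoly F) (phi : var -> grass F).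

Definition Xw s : fpoly F := << (FMonom s : word) >>.

Lemma XwE (w : word) : Xw w = << w >>.
Proof. by rewrite /Xw fmK. Qed.

Lemma Xw_cat s1 s2 : Xw (s1 ++ s2) = Xw s1 * Xw s2.
Proof. by rewrite /Xw malgM_def fgmulUU mulr1 -[mmul _ _]/(fmmul _ _) fmmulE. Qed.

Lemma prod_X s : \prod_(x <- s) X x = Xw s.
Proof.
elim: s => [|x s IH]; last by rewrite big_cons IH -Xw_cat.
by rewrite big_nil /Xw -fmoneE.
Qed.

Lemma prod_mapX s : \prod_(y <- map X s) y = Xw s.
Proof. by rewrite big_map prod_X. Qed.

Lemma gevalE phi g : geval phi g = mlift (fun w : word => gprod (map phi w)) g.
Proof. by []. Qed.

Lemma geval_is_linear phi : linear (geval phi).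
Proof. exact: mlift_is_linear. Qed.

HB.instance Definition _ phi :=
  GRing.isLinear.Build F (fpoly F) (grass F) *:%R (geval phi) (geval_is_linear phi).

Lemma geval_Xw phi s : geval phi (Xw s) = gprod (map phi s).
Proof. exact: mliftU. Qed.

Lemma geval_mul phi g1 g2 : geval phi (g1 * g2) = gmul (geval phi g1) (geval phi g2).
Proof.
have eU (w1 : word) :
    geval phi (<< w1 >> * g2) = gmul (geval phi << w1 >>) (geval phi g2).
  rewrite !gevalE mliftU mlift_comp malgM_def fgmulUg linear_sum.
  by apply: eq_bigr => w2 _ /=; rewrite mul1r mliftUc fmM map_cat gprod_cat.
exact: (mlift_ext (Phi := geval phi \o (g2 \o* idfun))
                  (Psi := gmulr (geval phi g2) \o geval phi) eU g1).
Qed.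

Lemma eq_geval phi psi g :
  (forall w : word, w \in msupp g -> {in (w : seq var), phi =1 psi}) ->
  geval phi g = geval psi g.
Proof. by move=> ephi; apply: eq_in_mlift => w /ephi /eq_in_map ->. Qed.

Lemma inTZB_mulr h f g k : inTZ h f -> inTZ h g -> inTZ h (f - g * k).
Proof.
move=> fT gT phi phiE.
by rewrite raddfB /= geval_mul (fT _ phiE) (gT _ phiE) -/(gmulr _ 0) raddf0 subrr.
Qed.

End Words.

Arguments Xw {F} s.

Lemma mulr_lie (R : nzRingType) (u x v : R) : u * lie x v = u * (x * v) - u * v * x.
Proof. by rewrite /lie mulrBr !mulrA. Qed.

Lemma lie_prodr (R : nzRingType) (x : R) (ys : seq R) :
  lie x (\prod_(y <- ys) y) =
    \sum_(j < size ys)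
      (\prod_(y <- take j ys) y) * lie x ys`_j * \prod_(y <- drop j.+1 ys) y.
Proof.
elim: ys => [|y ys IH]; first by rewrite big_nil big_ord0 /lie mulr1 mul1r subrr.
rewrite big_cons big_ord_recl /= -/(size ys) drop0 big_nil mul1r.
have -> : lie x (y * \prod_(z <- ys) z) =
    lie x y * \prod_(z <- ys) z + y * lie x (\prod_(z <- ys) z).
  by rewrite /lie mulrBl mulrBr !mulrA addrA subrK.
rewrite IH mulr_sumr; congr (_ + _); apply: eq_bigr => j _.
by rewrite add0n /bump leq0n add1n big_cons !mulrA.
Qed.

Lemma perm_rem_rcons (T : eqType) (zs : seq T) (a : T) (w : seq T) :
  perm_eq w (rcons zs a) -> perm_eq (rem a w) zs.
Proof.
move=> wP; have aw : a \in w by rewrite (perm_mem wP) mem_rcons mem_head.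
by rewrite -(perm_cons a) -(permPl (perm_to_rem aw)) (permPl wP) perm_rcons.
Qed.

Lemma split_at (T : eqType) (a : T) (w : seq T) :
  a \in w -> w = take (index a w) w ++ a :: drop (index a w).+1 w.
Proof.
move=> aw; rewrite -{1}(cat_take_drop (index a w) w).
by rewrite (drop_nth a) ?index_mem // nth_index.
Qed.

Section EraseVariable.

Variable F : fieldType.
Implicit Types (a : var) (zs : seq var) (f g : fpoly F).

Definition erase_var a f : fpoly F := mlift (fun w : word => Xw (rem a w)) f.

Lemma Gamma_Xw zs s : perm_eq s zs -> Gamma zs (Xw s : fpoly F).
Proof. by move=> szs w; rewrite msuppU1 inE => /eqP ->. Qed.

Lemma GammaB zs f g : Gamma zs f -> Gamma zs g -> Gamma zs (f - g).
Proof.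
by move=> Gf Gg w /(fsubsetP (msuppB_le _ _)); rewrite in_fsetU => /orP [/Gf|/Gg].
Qed.

Lemma Gamma_mlift zs (G : word -> fpoly F) f :
  (forall w, w \in msupp f -> Gamma zs (G w)) -> Gamma zs (mlift G f).
Proof. by move=> GG w' /msupp_mlift [w /GG]; apply. Qed.

Lemma Gamma_erase_var zs a f : Gamma (rcons zs a) f -> Gamma zs (erase_var a f).
Proof. by move=> Gf; apply: Gamma_mlift => w /Gf /perm_rem_rcons /Gamma_Xw. Qed.

Lemma geval_erase_var (phi : var -> grass F) a (S : {fset nat}) f :
  (forall w : word, w \in msupp f -> a \in (w : seq var)) ->
  phi a = << S >> -> ~~ odd #|` S| ->
  geval phi f = gmul (geval phi (erase_var a f)) << S >>.
Proof.
move=> af phiS eS; rewrite -[RHS]/(gmulr _ _) /erase_var.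
rewrite (mlift_comp (geval phi)) (mlift_comp (gmulr _)) gevalE.
apply: eq_in_mlift => w /af aw /=.
by rewrite /gmulr geval_Xw remE {1}(split_at aw) !map_cat /= phiS gprod_insertU.
Qed.

Lemma inTZ_erase_var h zs a n f :
  a \notin zs -> alpha a = n%:Z -> ~~ odd n ->
  Gamma (rcons zs a) f -> inTZ h f -> inTZ h (erase_var a f).
Proof.
move=> azs alpha_a en Gf fT phi phiE; set x := geval phi (erase_var a f).
have [S [cardS degS dS]] := fresh_fset (\bigcup_(T <- msupp x) T)%fset h n.
pose psi y := if y == a then << S >> else phi y.
have psiE y : inEh h (alpha y) (psi y).
  rewrite /psi; case: eqP => [->|_]; last exact: phiE.
  by move=> T; rewrite msuppU oner_eq0 inE alpha_a => /eqP ->; rewrite degS.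
have psi_x : geval psi (erase_var a f) = x.
  apply: eq_geval => w /(Gamma_erase_var Gf) wP y yw; rewrite /psi.
  by case: eqP => // eya; rewrite -eya -(perm_mem wP) yw in azs.
have psi_f : geval psi f = gmul x << S >>.
  rewrite -psi_x; apply: geval_erase_var; last by rewrite cardS.
    by move=> w /Gf wP; rewrite (perm_mem wP) mem_rcons mem_head.
  by rewrite /psi eqxx.
apply: (@gmulU_eq0 _ _ S); last by rewrite -psi_f fT.
by move=> T Tx; apply: fdisjointWl dS; exact: bigfcup_sup.
Qed.

Lemma remainderE a f :
  f - erase_var a f * X a = mlift (fun w : word => Xw w - Xw (rem a w) * X a) f.
Proof.
rewrite mliftB_fun; congr (_ - _).
  by rewrite -[LHS]mlift_id; apply: eq_in_mlift => w _; rewrite XwE.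
exact: (mlift_comp (X a \o* idfun)).
Qed.

Lemma Xw_sub_erase a (w : seq var) : a \in w ->
  Xw w - Xw (rem a w) * X a =
    Xw (take (index a w) w) * lie (X a) (Xw (drop (index a w).+1 w)) :> fpoly F.
Proof.
by move=> aw; rewrite {1}(split_at aw) remE -cat1s !Xw_cat mulr_lie.
Qed.

Lemma Gamma_remainder zs a f :
  Gamma (rcons zs a) f -> Gamma (rcons zs a) (f - erase_var a f * X a).
Proof.
move=> Gf; rewrite remainderE; apply: Gamma_mlift => w /Gf wP.
apply: GammaB; first exact: Gamma_Xw.
rewrite -[X a]/(Xw [:: a]) -Xw_cat; apply: Gamma_Xw.
rewrite cats1 perm_rcons perm_sym perm_rcons perm_cons perm_sym.
exact: perm_rem_rcons.
Qed.

End EraseVariable.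

Section CommutatorShape.

Variables (F : fieldType) (d : nat -> nat) (m : nat).
Implicit Types (f : fpoly F).

Lemma f2_shape_prod (us : seq (fpoly F)) :
  (forall u, u \in us -> f2_factor d m u) -> f2_shape d m (\prod_(u <- us) u).
Proof.
move=> usP; exists [:: (1, us)]; split; last by rewrite big_seq1 scale1r.
by move=> t; rewrite inE => /eqP ->.
Qed.

Lemma f2_shapeZ c f : f2_shape d m f -> f2_shape d m (c *: f).
Proof.
case=> terms [termsP ->]; exists [seq (c * t.1, t.2) | t <- terms]; split.
  by move=> t' /mapP [t tterms ->]; exact: (termsP t tterms).
by rewrite big_map scaler_sumr; apply: eq_bigr => t _; rewrite scalerA.
Qed.

Lemma f2_shape_sum (I : eqType) (r : seq I) (P : I -> fpoly F) :
  (forall i, i \in r -> f2_shape d m (P i)) -> f2_shape d m (\sum_(i <- r) P i).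
Proof.
elim: r => [_|i r IH rP]; first by exists [::]; rewrite !big_nil.
rewrite big_cons; have [terms1 [terms1P ->]] := rP i (mem_head i r).
have [terms2 [terms2P ->]] : f2_shape d m (\sum_(j <- r) P j).
  by apply: IH => j jr; apply: rP; rewrite in_cons jr orbT.
exists (terms1 ++ terms2); split; last by rewrite big_cat.
by move=> t; rewrite mem_cat => /orP [/terms1P|/terms2P].
Qed.

Lemma f2_shape_mlift (G : word -> fpoly F) f :
  (forall w, w \in msupp f -> f2_shape d m (G w)) -> f2_shape d m (mlift G f).
Proof. by move=> GP; apply: f2_shape_sum => w /GP; exact: f2_shapeZ. Qed.

End CommutatorShape.

Lemma zlistS d n : zlist d n.+1 = rcons (zlist d n) (zv d n.+1).
Proof.
rewrite /zlist -map_rcons; congr map.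
by rewrite -cats1 -[n.+1]addn1 iotaD add1n addn1.
Qed.

Lemma mem_zlist d n x : x \in zlist d n -> exists2 i, (1 <= i <= n)%N & x = zv d i.
Proof.
by case/mapP => i; rewrite mem_iota add1n ltnS => i1n ->; exists i.
Qed.

Lemma zv_notin_zlist d n : zv d n.+1 \notin zlist d n.
Proof.
by apply/negP => /mem_zlist [i /andP [_ ilen] [_ ein]]; rewrite -ein ltnn in ilen.
Qed.

Lemma f2_shape_word (F : fieldType) d n (w : seq var) : perm_eq w (zlist d n.+1) ->
  f2_shape d n.+1 (Xw w - Xw (rem (zv d n.+1) w) * X (zv d n.+1) : fpoly F).
Proof.
set a := zv d n.+1 => wP.
have aw : a \in w by rewrite (perm_mem wP) zlistS mem_rcons mem_head.
have remP y : y \in rem a w -> exists2 i, (1 <= i < n.+1)%N & y = zv d i.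
  have remzs : perm_eq (rem a w) (zlist d n) by apply: perm_rem_rcons; rewrite -zlistS.
  by rewrite (perm_mem remzs) => /mem_zlist [i i1n ->]; exists i; rewrite ?ltnS.
have uP y : y \in take (index a w) w -> y \in rem a w by rewrite remE mem_cat => ->.
have vP y : y \in drop (index a w).+1 w -> y \in rem a w.
  by rewrite remE mem_cat orbC => ->.
rewrite Xw_sub_erase //; set u := take _ w; set v := drop _ w.
rewrite -!prod_mapX lie_prodr mulr_sumr; apply: f2_shape_sum => j _; set ys := map X v.
have prod_cons (x : fpoly F) s : x * \prod_(z <- s) z = \prod_(z <- x :: s) z.
  by rewrite big_cons.
rewrite -mulrA prod_cons -!big_cat.
apply: f2_shape_prod => z; rewrite !mem_cat in_cons.
case/or4P => [/mapP [y /uP /remP [i ? ->] ->]|/mem_take|/eqP ->|/mem_drop].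
- by left; exists i.
- by case/mapP => y /vP /remP [i ? ->] ->; left; exists i.
- have /mapP [y /vP /remP [i /andP [i1 /ltnW ilen] ->] ->] : ys`_j \in ys by exact: mem_nth.
  by right; exists n.+1, i; do !split; rewrite ?leqnn ?i1.
- by case/mapP => y /vP /remP [i ? ->] ->; left; exists i.
Qed.

Lemma inI0 (F : fieldType) : inI (0 : fpoly F).
Proof. by move=> J JI _; exact: gti0 JI. Qed.

Theorem mainTheorem11 (F : fieldType) (charF0 : [pchar F] =i pred0)
  (h p q : nat) (hq : (1 <= q)%N) (d : nat -> nat)
  (dpos : forall i, (1 <= i <= p + q)%N -> (0 < d i)%N)
  (dodd : forall i, (1 <= i <= p)%N -> odd (d i))
  (deven : forall i, (p < i <= p + q)%N -> ~~ odd (d i))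
  (f : fpoly F)
  (hfG : Gamma (zlist d (p + q)) f) (hfT : inTZ h f) :
  exists f1 f2 : fpoly F,
    inI (f - (f1 * X (zv d (p + q)) + f2)) /\
    Gamma (zlist d (p + q).-1) f1 /\ inTZ h f1 /\
    f2_shape d (p + q) f2 /\
    Gamma (zlist d (p + q)) f2 /\ inTZ h f2.
Proof.
have [n mE] : exists n, (p + q)%N = n.+1.
  by exists (p + q).-1; rewrite prednK // addn_gt0 hq orbT.
have even_dm : ~~ odd (d n.+1).
  by rewrite -mE; apply: deven; rewrite leqnn andbT -{1}[p]addn0 ltn_add2l.
rewrite mE /= in hfG *; set a := zv d n.+1.
have Gf : Gamma (rcons (zlist d n) a) f by rewrite -zlistS.
have f1T := inTZ_erase_var (zv_notin_zlist d n) erefl even_dm Gf hfT.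
exists (erase_var a f), (f - erase_var a f * X a).
split; [|split; [|split; [|split; [|split]]]].
- by rewrite [_ * _ + _]addrC subrK subrr; exact: inI0.
- exact: Gamma_erase_var Gf.
- exact: f1T.
- by rewrite remainderE; apply: f2_shape_mlift => w /hfG; exact: f2_shape_word.
- by rewrite zlistS; exact: Gamma_remainder.
- exact: inTZB_mulr.
Qed.
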